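(* For every integer $m\ge 5$, the independence polynomial $I(T_{m,3};t)$ is unimodal and its mode belongs to $\{\rho_m,\rho_m+1,\rho_m+2\}$, where $\rho_m$ denotes the mode of the independence polynomial $I(C_m;t)$ of the cycle $C_m$.
   Context: For a simple graph $G$, the independence polynomial is $I(G;t)=\sum_{k\ge 0}s_k(G)t^k$, where $s_k(G)$ is the number of independent sets (sets of pairwise non-adjacent vertices) of size $k$ in $G$. $C_m$ is the cycle on $m$ vertices; its independence polynomial is known to be unimodal. For integers $m\ge 3$, $n\ge 1$, the tadpole graph $T_{m,n}$ is the simple graph with vertex set $\{x_1,\dots,x_m,y_1,\dots,y_n\}$ and edges $\{x_i,x_{i+1}\}$ for $1\le i\le m-1$, $\{x_m,x_1\}$, $\{y_j,y_{j+1}\}$ for $1\le j\le n-1$, and $\{x_m,y_1\}$. A polynomial $\sum a_kt^k$ with nonnegative coefficients is unimodal if $a_0\le\cdots\le a_m\ge a_{m+1}\ge\cdots$ for some $m$; with $a_{-1}=0$, its mode is the unique $i$ with $a_{i-1}<a_i\ge a_{i+1}\ge a_{i+2}\ge\cdots$. *)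

From mathcomp Require Import all_boot.
Set Implicit Arguments. Unset Strict Implicit. Unset Printing Implicit Defensive.

(* Adjacency of the cycle C_m on vertices 0..m-1 (x_{i+1} ~ i). *)
Definition cycle_adj (m a b : nat) : bool :=
  [&& a < m, b < m & (b == (a.+1) %% m) || (a == (b.+1) %% m)].

Definition cycle_graph (m : nat) : rel 'I_m := fun a b => cycle_adj m a b.

(* Tadpole T_{m,n} on vertices 0..m+n-1: x_i |-> i-1, y_j |-> m+j-1.
   Cycle edges among 0..m-1, path edges m-1 -- m -- ... -- m+n-1
   (the edge m-1 -- m is {x_m, y_1}). *)
Definition tadpole_adj (m n a b : nat) : bool :=
  cycle_adj m a b ||
  [&& m.-1 <= a, a < m + n, m.-1 <= b, b < m + n & (b == a.+1) || (a == b.+1)].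

Definition tadpole_graph (m n : nat) : rel 'I_(m + n) :=
  fun a b => tadpole_adj m n a b.

Definition independent (V : finType) (e : rel V) (A : {set V}) : bool :=
  [forall x in A, forall y in A, ~~ e x y].

Definition indep_coef (V : finType) (e : rel V) (k : nat) : nat :=
  #|[set A : {set V} | independent e A && (#|A| == k)]|.

Definition unimodal (a : nat -> nat) : Prop :=
  exists k, (forall i, i < k -> a i <= a i.+1) /\ (forall i, k <= i -> a i.+1 <= a i).

(* a_{-1} = 0 convention *)
Definition prev_coef (a : nat -> nat) (i : nat) : nat :=
  if i is j.+1 then a j else 0.

Definition is_mode (a : nat -> nat) (i : nat) : Prop :=
  prev_coef a i < a i /\ (forall j, i <= j -> a j.+1 <= a j).

Arguments cycle_graph m : clear implicits.
Arguments tadpole_graph m n : clear implicits.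

From mathcomp Require Import all_boot.
From mathcomp Require Import zify ring.

Set Implicit Arguments.
Unset Strict Implicit.
Unset Printing Implicit Defensive.

(* Both graphs are the path 0 - 1 - ... - (L-1) plus the chord {0, m-1}
   (L = m for C_m, L = m + 3 for T_{m,3}), so their independent k-sets are the
   bit strings of length L with k ones, no two of them adjacent and not both at
   the ends of the chord.  Counting these strings gives, with p_j = 'C(m - j, j),
     s_k(C_m)     = c_k = p_k + 'C(m - k - 1, k - 1),
     s_k(T_{m,3}) = c_k + 2 c_{k-1} + p_{k-1} + p_{k-2}.
   The cycle coefficients satisfy c_j j(m - j) = c_{j-1} (m + 2 - 2j)(m + 1 - 2j)
   for 0 < j < m, and for 2j <= m the left factor grows while the right one
   shrinks with j.  So c increases up to the last x with
   x(m - x) < (m + 2 - 2x)(m + 1 - 2x), strictly at x, and decreases afterwards,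
   while p increases up to x - 1 and decreases from x.  Termwise, s_k(T_{m,3})
   then increases up to k = x and decreases from k = x + 2 on; the one remaining
   step s_{x+2} <= s_{x+1} reduces to p_{x+2} <= p_{x-1} and
   'C(m - x - 3, x + 1) <= 'C(m - x - 1, x - 1), which follow from explicit
   polynomial inequalities.  Hence T_{m,3} has its mode at x or x + 1. *)

Fixpoint sparse (s : seq bool) : bool :=
  if s is b :: t then ~~ (b && head false t) && sparse t else true.

Fixpoint bitseqs (n : nat) : seq (seq bool) :=
  if n is n'.+1 then map (cons false) (bitseqs n') ++ map (cons true) (bitseqs n')
  else [:: [::]].

Lemma mem_map_cons (T : eqType) (b c : T) (s : seq T) (r : seq (seq T)) :
  (b :: s \in map (cons c) r) = (b == c) && (s \in r).
Proof. by apply/mapP/andP => [[t tr [-> ->]] // | [/eqP -> sr]]; exists s. Qed.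

Lemma mem_bitseqs n s : (s \in bitseqs n) = (size s == n).
Proof.
elim: n s => [|n IHn] [|b s] //=; rewrite mem_cat.
  by apply/negbTE; rewrite negb_or; apply/andP; split; apply/mapP => -[x _ /eqP].
by rewrite !mem_map_cons IHn eqSS; case: b; rewrite ?orbF.
Qed.

Lemma uniq_bitseqs n : uniq (bitseqs n).
Proof.
elim: n => [|n IHn] //=; have cons_inj b : injective (cons b) by move=> s t [].
rewrite cat_uniq !map_inj_uniq ?IHn //= andbT.
by apply/hasPn => _ /mapP[s _ ->]; rewrite /= mem_map_cons.
Qed.

Lemma count_bitseqsS (P : pred (seq bool)) n :
  count P (bitseqs n.+1) =
  count (fun s => P (false :: s)) (bitseqs n) + count (fun s => P (true :: s)) (bitseqs n).
Proof. by rewrite /= count_cat !count_map. Qed.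

Lemma count_bitseqs_cat (P : pred (seq bool)) a b :
  count P (bitseqs (a + b)) =
  \sum_(s <- bitseqs a) count (fun t => P (s ++ t)) (bitseqs b).
Proof.
elim: a P => [|a IHa] P; first by rewrite big_seq1.
by rewrite addSn count_bitseqsS !IHa /= big_cat !big_map.
Qed.

Lemma sum_nat_of_bool (T : Type) (r : seq T) (a : pred T) :
  \sum_(x <- r) (a x : nat) = count a r.
Proof. by rewrite -sumn_count sumnE big_map. Qed.

Lemma sparse_cat s t :
  sparse (s ++ t) = [&& sparse s, sparse t & ~~ (last false s && head false t)].
Proof.
elim: s => [|b s IHs] /=; first by rewrite andbT.
rewrite IHs; case: s {IHs} => [|c s] /=; last by rewrite !andbA.
by case: b; case: (sparse t); rewrite /= ?andbT ?andbF.
Qed.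

Lemma sparseP s : reflect (forall i, ~~ (nth false s i && nth false s i.+1)) (sparse s).
Proof.
elim: s => [|b s IHs] /=; first by constructor=> i; rewrite nth_nil.
apply: (iffP andP) => [[hb /IHs hs] [|i] /= | h]; [by rewrite nth0 | exact: hs |].
by split; [rewrite -nth0; exact: (h 0) | apply/IHs => i; exact: (h i.+1)].
Qed.

Definition sparse_count n k := count (fun s => sparse s && (count id s == k)) (bitseqs n).

Definition diag_bin m j := 'C(m - j, j).

Lemma sparse_count0 n : sparse_count n 0 = 1.
Proof.
elim: n => [|n IHn] //; rewrite /sparse_count count_bitseqsS -[RHS]addn0 -IHn.
congr (_ + _).
by rewrite (eq_count (a2 := pred0)) ?count_pred0 // => s /=; rewrite andbF.
Qed.

Lemma sparse_countSS n k :
  sparse_count n.+2 k.+1 = sparse_count n.+1 k.+1 + sparse_count n k.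
Proof.
rewrite /sparse_count count_bitseqsS; congr (_ + _).
rewrite count_bitseqsS -[RHS]addn0; congr (_ + _).
by rewrite (eq_count (a2 := pred0)) ?count_pred0.
Qed.

Lemma sparse_count_diag n k : sparse_count n k = diag_bin n.+1 k.
Proof.
rewrite /diag_bin; elim/ltn_ind: n k => -[|[|n]] IHn [|k]; rewrite ?sparse_count0 ?bin0 //.
  by case: k.
rewrite sparse_countSS !IHn //.
case: (leqP k n.+1) => hk; last by rewrite !bin_small //; lia.
by rewrite !subSS (subSn hk) binS.
Qed.

Lemma count_sparse_last_false n k :
  count (fun s => sparse s && ~~ last false s && (count id s == k)) (bitseqs n.+1) =
  sparse_count n k.
Proof.
rewrite -addn1 count_bitseqs_cat /sparse_count -sum_nat_of_bool.
apply: eq_bigr => s _.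
by rewrite /= !sparse_cat !last_cat !count_cat /= !andbF !andbT !addn0.
Qed.

Definition cyclic_sparse s := sparse s && ~~ (head false s && last false s).

Definition cycle_coef m k := diag_bin m k + prev_coef (diag_bin (m - 2)) k.

Lemma count_cyclic_sparse n k :
  count (fun s => cyclic_sparse s && (count id s == k)) (bitseqs n.+3) = cycle_coef n.+3 k.
Proof.
rewrite count_bitseqsS; congr (_ + _).
  rewrite -sparse_count_diag /sparse_count; apply: eq_count => s.
  by rewrite /cyclic_sparse /= andbT.
rewrite count_bitseqsS [X in _ + X](eq_count (a2 := pred0)) ?count_pred0 ?addn0 //.
case: k => [|k] /=.
  by rewrite (eq_count (a2 := pred0)) ?count_pred0 // => s; rewrite andbF.
rewrite -sparse_count_diag -count_sparse_last_false; apply: eq_count => s.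
by rewrite /cyclic_sparse /= add1n eqSS.
Qed.

Section BitsOfSets.

Variable L : nat.
Implicit Types A B : {set 'I_L}.

Definition bits A : seq bool := [seq i \in A | i <- enum 'I_L].

Lemma size_bits A : size (bits A) = L.
Proof. by rewrite size_map size_enum_ord. Qed.

Lemma nth_bits A (i : 'I_L) : nth false (bits A) i = (i \in A).
Proof. by rewrite (nth_map i) ?size_enum_ord // nth_ord_enum. Qed.

Lemma nth_bitsP A i : reflect (exists2 x : 'I_L, x \in A & val x = i) (nth false (bits A) i).
Proof.
case: (ltnP i L) => [iL | Li].
  rewrite (nth_bits A (Ordinal iL)); apply: (iffP idP) => [|[x xA xi]].
    by exists (Ordinal iL).
  by rewrite (_ : Ordinal iL = x) //; apply: val_inj.
rewrite nth_default ?size_bits //; constructor => -[x _ xi].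
by move: (ltn_ord x); rewrite xi ltnNge Li.
Qed.

Lemma card_bits A : #|A| = count id (bits A).
Proof.
rewrite count_map cardE /enum_mem size_filter count_filter.
by apply: eq_count => i; rewrite /= andbT.
Qed.

Lemma bits_inj : injective bits.
Proof. by move=> A B eqAB; apply/setP => i; rewrite -!nth_bits eqAB. Qed.

Lemma card_set_bits (Q : pred (seq bool)) :
  #|[set A : {set 'I_L} | Q (bits A)]| = count Q (bitseqs L).
Proof.
rewrite cardE /enum_mem size_filter -(eq_count (a1 := Q \o bits)); last first.
  by move=> A; rewrite /= inE.
rewrite -enumT -count_map; apply/permP/uniq_perm; rewrite ?uniq_bitseqs ?map_inj_uniq //.
- by rewrite -enumT enum_uniq.
- exact: bits_inj.
move=> s; rewrite mem_bitseqs; apply/mapP/eqP => [[A _ ->] | sL]; first exact: size_bits.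
exists [set i : 'I_L | nth false s i]; first by rewrite mem_enum.
apply: (@eq_from_nth _ false) => [|j]; first by rewrite sL; symmetry; apply: size_bits.
by rewrite sL => jL; rewrite (nth_bits _ (Ordinal jL)) inE.
Qed.

End BitsOfSets.

Definition path_chord_adj (w i j : nat) : bool :=
  [|| j == i.+1, i == j.+1, (i == 0) && (j == w) | (i == w) && (j == 0)].

Lemma independent_path_chord L w (A : {set 'I_L}) :
  independent (fun i j : 'I_L => path_chord_adj w i j) A =
  sparse (bits A) && ~~ (nth false (bits A) 0 && nth false (bits A) w).
Proof.
apply/forall_inP/andP => [indA | [/sparseP sA chordA] x xA].
  have indA' i j : nth false (bits A) i -> nth false (bits A) j -> ~~ path_chord_adj w i j.
    by move=> /nth_bitsP[x xA <-] /nth_bitsP[y yA <-]; exact: (forall_inP (indA x xA)).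
  split.
    apply/sparseP => i; apply/negP => /andP[hi hi1].
    by move: (indA' _ _ hi hi1); rewrite /path_chord_adj eqxx.
  apply/negP => /andP[h0 hw].
  by move: (indA' _ _ h0 hw); rewrite /path_chord_adj !eqxx orbT.
apply/forall_inP => y yA; rewrite -!nth_bits in xA yA; rewrite /path_chord_adj.
apply/negP => /or4P[/eqP e | /eqP e | /andP[/eqP e0 /eqP ew] | /andP[/eqP ew /eqP e0]].
- by move: (sA x); rewrite xA -e yA.
- by move: (sA y); rewrite yA -e xA.
- by move: chordA; rewrite -e0 -ew xA yA.
- by move: chordA; rewrite -e0 -ew xA yA.
Qed.

Lemma indep_coef_path_chord L w k :
  indep_coef (fun i j : 'I_L => path_chord_adj w i j) k =
  count (fun s => sparse s && ~~ (nth false s 0 && nth false s w) && (count id s == k))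
        (bitseqs L).
Proof.
rewrite /indep_coef -card_set_bits; apply: eq_card => A.
by rewrite !inE independent_path_chord card_bits.
Qed.

Lemma eq_indep_coef (V : finType) (e e' : rel V) : e =2 e' -> indep_coef e =1 indep_coef e'.
Proof.
move=> ee' k; apply: eq_card => A; rewrite !inE; congr (_ && _).
by apply: eq_forallb_in => x _; apply: eq_forallb_in => y _; rewrite ee'.
Qed.

Lemma cycle_adjE m i j : 2 < m -> i < m -> j < m -> cycle_adj m i j = path_chord_adj m.-1 i j.
Proof.
move=> m_gt2 im jm; rewrite /cycle_adj /path_chord_adj im jm /=.
have modS k : k < m -> k.+1 %% m = if k.+1 == m then 0 else k.+1.
  by move=> km; case: eqP => [->|?]; rewrite ?modnn // modn_small //; lia.
rewrite !modS //; case: ifP => /eqP ?; case: ifP => /eqP ?; apply/idP/idP; lia.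
Qed.

Lemma tadpole_adjE m n i j :
  2 < m -> i < m + n -> j < m + n -> tadpole_adj m n i j = path_chord_adj m.-1 i j.
Proof.
move=> m_gt2 imn jmn; rewrite /tadpole_adj.
have [/andP[im jm] | Nij] := boolP ((i < m) && (j < m)).
  by rewrite cycle_adjE // /path_chord_adj; apply/idP/idP; lia.
rewrite /cycle_adj /path_chord_adj; apply/idP/idP; lia.
Qed.

Lemma indep_coef_cycle m k : 2 < m -> indep_coef (cycle_graph m) k = cycle_coef m k.
Proof.
move=> m_gt2; rewrite (@eq_indep_coef _ _ (fun i j : 'I_m => path_chord_adj m.-1 i j)); last first.
  by move=> i j; apply: cycle_adjE.
rewrite indep_coef_path_chord; have [n ->] : exists n, m = n.+3 by exists (m - 3); lia.
rewrite -count_cyclic_sparse; apply: eq_in_count => s; rewrite mem_bitseqs => /eqP sz.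
by rewrite /cyclic_sparse nth0 -sz nth_last.
Qed.

Definition tadpole3_tail m k :=
  2 * prev_coef (cycle_coef m) k + prev_coef (diag_bin m) k + prev_coef (prev_coef (diag_bin m)) k.

Definition tadpole3_coef m k := cycle_coef m k + tadpole3_tail m k.

Lemma count_succ_eq (T : Type) (P : pred T) (g : T -> nat) r f :
  (forall j, count (fun s => P s && (g s == j)) r = f j) ->
  forall k, count (fun s => P s && ((g s).+1 == k)) r = prev_coef f k.
Proof.
move=> countE [|k] /=; last by rewrite -countE; apply: eq_count => s; rewrite eqSS.
by rewrite (eq_count (a2 := pred0)) ?count_pred0 // => s; rewrite andbF.
Qed.

(* The sparse tails t of length 3 are 000, 010, 001 and, when b is false, 100, 101. *)
Lemma count_sparse_tail3 (c b : bool) K k :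
  count (fun t => [&& c, sparse t, ~~ (b && head false t) & K + count id t == k]) (bitseqs 3) =
  (c && (K == k)) + 2 * (c && (K.+1 == k)) + (c && ~~ b && (K.+1 == k))
  + (c && ~~ b && (K.+2 == k)).
Proof. by rewrite /= !addn0 !addn1 addn2 !andbF !andbT; case: c; case: b => /=; ring. Qed.

Lemma count_tadpole3 n k :
  count (fun u => sparse u && ~~ (nth false u 0 && nth false u n.+2) && (count id u == k))
        (bitseqs (n.+3 + 3)) = tadpole3_coef n.+3 k.
Proof.
pose D s := cyclic_sparse s && ~~ last false s.
rewrite count_bitseqs_cat.
rewrite (eq_big_seq (fun s => (cyclic_sparse s && (count id s == k))
  + 2 * (cyclic_sparse s && ((count id s).+1 == k))
  + (D s && ((count id s).+1 == k)) + (D s && ((count id s).+2 == k)))); last first.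
  move=> s; rewrite mem_bitseqs => /eqP sz; rewrite /D -count_sparse_tail3.
  apply: eq_count => t; rewrite sparse_cat count_cat !nth_cat sz ltnSn /= nth0.
  rewrite -[n.+2]/(n.+3).-1 -sz nth_last /cyclic_sparse.
  by case: (sparse s); case: (head false s); case: (last false s); rewrite /= ?andbF ?andbT ?andbA.
have DE j : count (fun s => D s && (count id s == j)) (bitseqs n.+3) = diag_bin n.+3 j.
  rewrite -sparse_count_diag -count_sparse_last_false; apply: eq_count => s.
  by rewrite /D /cyclic_sparse; case: (last false s); rewrite ?andbF ?andbT.
have CE := count_cyclic_sparse n.
rewrite !big_split big1_eq !sum_nat_of_bool CE !(count_succ_eq CE) (count_succ_eq DE).
by rewrite (count_succ_eq (count_succ_eq DE)) /tadpole3_coef /tadpole3_tail /=; lia.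
Qed.

Lemma indep_coef_tadpole3 m k : 2 < m -> indep_coef (tadpole_graph m 3) k = tadpole3_coef m k.
Proof.
move=> m_gt2; rewrite (@eq_indep_coef _ _ (fun i j : 'I_(m + 3) => path_chord_adj m.-1 i j)).
  rewrite indep_coef_path_chord; have [n ->] : exists n, m = n.+3 by exists (m - 3); lia.
  exact: count_tadpole3.
by move=> i j; apply: tadpole_adjE.
Qed.

Definition ratio_num m j := (m.+2 - 2 * j) * (m.+1 - 2 * j).
Definition ratio_den m j := j * (m - j).

Lemma diag_bin_ratio m j : diag_bin m j.+1 * (j.+1 * (m - j)) = diag_bin m j * ratio_num m j.+1.
Proof.
rewrite /diag_bin /ratio_num; case: (ltnP j m) => [jm | mj]; last first.
  have -> : m - j.+1 = 0 by lia.
  have -> : m.+2 - 2 * j.+1 = 0 by lia.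
  by rewrite bin0n !muln0.
have [n nE] : exists n, m - j = n.+1 by exists (m - j.+1); lia.
have -> : m - j.+1 = n by lia.
have -> : m.+2 - 2 * j.+1 = n.+1 - j by lia.
have -> : m.+1 - 2 * j.+1 = n - j by lia.
rewrite nE mulnA (mulnC _ j.+1) mul_bin_left -mulnA (mulnC _ n.+1) mul_bin_down.
by rewrite mulnCA mulnA mulnC.
Qed.

Lemma shifted_diag_bin_mul m j : j < m ->
  prev_coef (diag_bin (m - 2)) j * (m - j) = j * diag_bin m j.
Proof.
case: j => [|j] jm //=; rewrite /diag_bin -mul_bin_diag mulnC.
by have -> : (m - j.+1).-1 = m - 2 - j by lia.
Qed.

Lemma cycle_coef_mul m j : j < m -> cycle_coef m j * (m - j) = m * diag_bin m j.
Proof.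
move=> jm; rewrite /cycle_coef mulnDl shifted_diag_bin_mul // (mulnC j) -mulnDr.
by rewrite subnK ?(ltnW jm) // mulnC.
Qed.

Lemma cycle_coef_ratio m j : j.+1 < m ->
  cycle_coef m j.+1 * ratio_den m j.+1 = cycle_coef m j * ratio_num m j.+1.
Proof.
move=> jm; apply/eqP; rewrite -(eqn_pmul2r (_ : 0 < m - j)); last by lia.
apply/eqP; rewrite /ratio_den.
have -> : cycle_coef m j.+1 * (j.+1 * (m - j.+1)) * (m - j)
          = cycle_coef m j.+1 * (m - j.+1) * (j.+1 * (m - j)) by ring.
rewrite cycle_coef_mul // -mulnA diag_bin_ratio mulnA -cycle_coef_mul 1?ltnW //.
ring.
Qed.

Lemma ratio_leq u v K E : 0 < K -> u * K = v * E -> E <= K -> u <= v.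
Proof. by move=> K_gt0 uv EK; rewrite -(leq_pmul2r K_gt0) uv leq_mul2l EK orbT. Qed.

Lemma ratio_geq u v K E : 0 < K -> u * K = v * E -> K <= E -> v <= u.
Proof. by move=> K_gt0 uv KE; rewrite -(leq_pmul2r K_gt0) uv leq_mul2l KE orbT. Qed.

Lemma mul_chain a0 a1 a2 k1 k2 e1 e2 :
  a1 * k1 = a0 * e1 -> a2 * k2 = a1 * e2 -> a2 * (k2 * k1) = a0 * (e2 * e1).
Proof. by move=> h1 h2; rewrite mulnA h2 mulnAC h1 -mulnA (mulnC e1). Qed.

Lemma ratio_den_gt0 m j : 0 < j < m -> 0 < ratio_den m j.
Proof. by move=> /andP[j_gt0 jm]; rewrite muln_gt0 j_gt0 subn_gt0. Qed.

Lemma ratio_den_monotone m i j : 0 < i <= j -> 2 * j <= m -> ratio_den m i <= ratio_den m j.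
Proof.
move=> /andP[i_gt0 ij] jm; rewrite /ratio_den.
have [d dE] : exists d, j = i + d by exists (j - i); lia.
have [a aE] : exists a, m = 2 * j + a by exists (m - 2 * j); lia.
subst m j.
have -> : 2 * (i + d) + a - i = i + 2 * d + a by lia.
have -> : 2 * (i + d) + a - (i + d) = i + d + a by lia.
have -> : (i + d) * (i + d + a) = i * (i + 2 * d + a) + d * (d + a) by ring.
exact: leq_addr.
Qed.

Lemma ratio_num_antitone m i j : i <= j -> ratio_num m j <= ratio_num m i.
Proof. by move=> ij; rewrite /ratio_num; apply: leq_mul; apply: leq_sub2l; lia. Qed.

Lemma cycle_ratio_threshold m : 5 <= m -> exists x,
  [/\ 0 < x, 2 * x <= m, ratio_den m x < ratio_num m x
    & forall j, x < j < m -> ratio_num m j <= ratio_den m j].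
Proof.
move=> m_ge5; pose P j := (0 < j < m) && (ratio_den m j < ratio_num m j).
have P1 : P 1.
  rewrite /P /ratio_den /ratio_num mul1n (_ : m.+2 - 2 * 1 = m); last by lia.
  by rewrite ltn_Pmull; lia.
have P_le j : P j -> j <= m by case/andP=> /andP[_ /ltnW].
have [x /andP[/andP[x_gt0 xm] den_lt_num] x_max] := ex_maxnP (ex_intro _ 1 P1) P_le.
exists x; split => // [|j /andP[xj jm]].
  rewrite leqNgt; apply/negP => mx; move: den_lt_num.
  by rewrite /ratio_num (_ : m.+1 - 2 * x = 0) ?muln0 //; lia.
rewrite leqNgt; apply/negP => den_lt_num_j.
by have := x_max j; rewrite /P den_lt_num_j jm (leq_trans x_gt0 (ltnW xj)) => /(_ isT); lia.
Qed.

Lemma diag_bin_incr_ineq J d a : 0 < d -> (J + d) * (J + d + a) < (a + 2) * (a + 1) ->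
  J * (J + 2 * d + a + 1) <= (a + 2 * d + 2) * (a + 2 * d + 1).
Proof.
move=> d_gt0 h.
have Ja : J <= a + 1.
  rewrite leqNgt; apply/negP => aJ.
  have : (a + 2) * (a + 1) <= (J + d) * (J + d + a) by apply: leq_mul; lia.
  lia.
have -> : (a + 2 * d + 2) * (a + 2 * d + 1) = (a + 2) * (a + 1) + 2 * d * (2 * a + 3) + 4 * d * d.
  by ring.
have : J * (J + a) <= (J + d) * (J + d + a) by apply: leq_mul; lia.
have : J * (2 * d + 1) <= (a + 1) * (2 * d + 1) by apply: leq_mul.
have -> : J * (J + 2 * d + a + 1) = J * (J + a) + J * (2 * d + 1) by ring.
nia.
Qed.

Lemma diag_bin_drop3_ineq y a : a * (a - 1) <= (y + 2) * (y + a) ->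
  (a - 2) * (a - 3) * (a * (a - 1)) * ((a + 2) * (a + 1)) <=
  (y + 3) * (y + a) * ((y + 2) * (y + a + 1)) * ((y + 1) * (y + a + 2)).
Proof.
move=> h.
have h1 : (a - 2) * (a - 3) * ((a + 2) * (a + 1)) <= a * (a - 1) * (a * (a - 1)).
  case: (leqP a 2) => a2; first by rewrite (_ : a - 2 = 0) ?mul0n //; lia.
  have e1 : (a - 2) * (a + 1) <= a * (a - 1) by nia.
  have e2 : (a - 3) * (a + 2) <= a * (a - 1) by nia.
  apply: leq_trans (leq_mul e1 e2); apply: eq_leq; ring.
have h2 : (y + 2) * (y + a) * ((y + 2) * (y + a))
          <= (y + 1) * (y + 3) * ((y + a + 1) * (y + a + 2)).
  have ay : a <= 2 * y + 3.
    rewrite leqNgt; apply/negP => ya.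
    have : a * (2 * y + 3) <= a * (a - 1) by apply: leq_mul; lia.
    nia.
  have : (y + a) * (y + a) <= (y + a) * (3 * y + 3) by apply: leq_mul; lia.
  nia.
have -> : (y + 3) * (y + a) * ((y + 2) * (y + a + 1)) * ((y + 1) * (y + a + 2))
  = (y + 2) * (y + a) * ((y + 1) * (y + 3) * ((y + a + 1) * (y + a + 2))) by ring.
have -> : (a - 2) * (a - 3) * (a * (a - 1)) * ((a + 2) * (a + 1))
  = (a - 2) * (a - 3) * ((a + 2) * (a + 1)) * (a * (a - 1)) by ring.
apply: leq_trans (leq_mul h1 (leqnn _)) _.
apply: leq_trans (leq_mul (leq_mul h h) h) _.
by rewrite mulnC leq_mul.
Qed.

Lemma shifted_diag_bin_drop2_ineq y a : a * (a - 1) <= (y + 2) * (y + a) ->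
  (y + 1) * (y + 1 + a) < (a + 2) * (a + 1) ->
  (a - 2) * (a - 3) * (a * (a - 1)) <= (y + 2) * (y + a - 1) * ((y + 1) * (y + a)).
Proof.
move=> h1 h0.
suff h2 : (a - 2) * (a - 3) <= (y + 1) * (y + a - 1).
  by apply: leq_trans (leq_mul h2 h1) _; apply: eq_leq; ring.
case: (leqP a 3) => a3; first by rewrite (_ : a - 3 = 0) ?muln0 //; lia.
have ya : 2 * y + 7 <= 3 * a.
  rewrite leqNgt; apply/negP => ay.
  have : (a + 2) * (a + 1) <= (y + 1) * (y + 1 + a) by nia.
  lia.
have [b aE] : exists b, a = b + 4 by exists (a - 4); lia.
subst a; clear h0.
have -> : b + 4 - 2 = b + 2 by lia.
have -> : b + 4 - 3 = b + 1 by lia.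
have -> : y + (b + 4) - 1 = y + b + 3 by lia.
nia.
Qed.

Lemma prev_coef_pred (a : nat -> nat) i : 0 < i -> prev_coef a i = a i.-1.
Proof. by case: i. Qed.

Lemma shift_incr (f : nat -> nat) n :
  (forall j, j < n -> f j <= f j.+1) -> forall j, j < n.+1 -> prev_coef f j <= prev_coef f j.+1.
Proof. by move=> f_incr [|j] //= jn; apply: f_incr. Qed.

Lemma shift_decr (f : nat -> nat) n :
  (forall j, n <= j -> f j.+1 <= f j) -> forall j, n < j -> prev_coef f j.+1 <= prev_coef f j.
Proof. by move=> f_decr [|j] //= nj; apply: f_decr. Qed.

Lemma unimodal_peak (a : nat -> nat) n :
  (forall i, i < n -> a i <= a i.+1) -> prev_coef a n < a n ->
  (forall i, n < i -> a i.+1 <= a i) ->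
  unimodal a /\ exists2 i, is_mode a i & n <= i <= n.+1.
Proof.
move=> a_incr a_peak a_decr.
have [lt_n | ge_n] := ltnP (a n) (a n.+1).
  have a_incr' i : i < n.+1 -> a i <= a i.+1.
    by rewrite ltnS leq_eqVlt => /orP[/eqP -> | /a_incr //]; exact: ltnW.
  split; first by exists n.+1.
  by exists n.+1; [split | rewrite leqnSn leqnn].
have a_decr' i : n <= i -> a i.+1 <= a i.
  by rewrite leq_eqVlt => /orP[/eqP <- // | /a_decr].
split; first by exists n.
by exists n; [split | rewrite leqnn leqnSn].
Qed.

Lemma eq_unimodal (a b : nat -> nat) : a =1 b -> unimodal a -> unimodal b.
Proof. by move=> ab [k [a_incr a_decr]]; exists k; split => i ki; rewrite -!ab; auto. Qed.

Lemma eq_is_mode (a b : nat -> nat) i : a =1 b -> is_mode a i -> is_mode b i.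
Proof.
move=> ab [a_peak a_decr]; split; last by move=> j ij; rewrite -!ab; auto.
by case: i a_peak {a_decr} => [|i] /=; rewrite -!ab.
Qed.

Section CycleThreshold.

Variables m x : nat.
Hypotheses (m_ge5 : 5 <= m) (x_gt0 : 0 < x) (x_half : 2 * x <= m).
Hypothesis den_lt_num : ratio_den m x < ratio_num m x.
Hypothesis num_le_den : forall j, x < j < m -> ratio_num m j <= ratio_den m j.

Lemma cycle_coef_incr j : j < x -> cycle_coef m j <= cycle_coef m j.+1.
Proof.
move=> jx; apply: (ratio_geq (ratio_den_gt0 _) (cycle_coef_ratio _)); try lia.
apply: ltnW; apply: leq_ltn_trans (ratio_den_monotone _ x_half) _; first lia.
exact: leq_trans den_lt_num (ratio_num_antitone _ jx).
Qed.

Lemma cycle_coef_peak : prev_coef (cycle_coef m) x < cycle_coef m x.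
Proof.
rewrite -(prednK x_gt0) /= -(ltn_pmul2r (ratio_den_gt0 (_ : 0 < x.-1.+1 < m))); last by lia.
rewrite cycle_coef_ratio ?prednK //; last by lia.
by rewrite ltn_pmul2l // /cycle_coef /diag_bin addn_gt0 bin_gt0; apply/orP; left; lia.
Qed.

Lemma cycle_coef_decr j : x <= j -> cycle_coef m j.+1 <= cycle_coef m j.
Proof.
move=> xj; case: (ltnP j.+1 m) => jm.
  apply: (ratio_leq (ratio_den_gt0 _) (cycle_coef_ratio jm)); first lia.
  by apply: num_le_den; lia.
rewrite /cycle_coef /diag_bin /=.
have -> : m - j.+1 = 0 by lia.
have -> : m - 2 - j = 0 by lia.
by rewrite !bin0n (gtn_eqF (leq_trans x_gt0 xj)).
Qed.

Lemma diag_bin_incr j : j < x.-1 -> diag_bin m j <= diag_bin m j.+1.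
Proof.
rewrite ltn_predRL => jx; apply: (ratio_geq _ (diag_bin_ratio m j)); first by rewrite muln_gt0; lia.
have [d xE] : exists d, x = j.+1 + d.+1 by exists (x - j.+2); lia.
have [a mE] : exists a, m = 2 * x + a by exists (m - 2 * x); lia.
have -> : m - j = j.+1 + 2 * d.+1 + a + 1 by lia.
have -> : ratio_num m j.+1 = (a + 2 * d.+1 + 2) * (a + 2 * d.+1 + 1).
  by rewrite /ratio_num mE xE; congr (_ * _); lia.
apply: diag_bin_incr_ineq => //.
have numx : ratio_num m x = (a + 2) * (a + 1) by rewrite /ratio_num mE; congr (_ * _); lia.
have denx : ratio_den m x = (j.+1 + d.+1) * (j.+1 + d.+1 + a).
  by rewrite /ratio_den mE xE; congr (_ * _); lia.
by rewrite -numx -denx.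
Qed.

Lemma diag_bin_decr j : x <= j -> diag_bin m j.+1 <= diag_bin m j.
Proof.
move=> xj; case: (ltnP j.+1 m) => jm; last first.
  by rewrite /diag_bin (_ : m - j.+1 = 0) ?bin0n //; lia.
apply: (ratio_leq _ (diag_bin_ratio m j)); first by rewrite muln_gt0; lia.
apply: leq_trans (num_le_den _) _; first lia.
by rewrite /ratio_den leq_mul2l leq_sub2l ?orbT.
Qed.

Lemma diag_bin_drop3 : diag_bin m x.+2 <= diag_bin m x.-1.
Proof.
have [y xE] : exists y, x = y.+1 by exists x.-1; lia.
have [a mE] : exists a, m = 2 * x + a by exists (m - 2 * x); lia.
have chain := mul_chain (mul_chain (diag_bin_ratio m y) (diag_bin_ratio m y.+1))
                        (diag_bin_ratio m y.+2).
rewrite xE; apply: (ratio_leq _ chain); first by rewrite !muln_gt0; lia.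
have num1 : ratio_num m y.+1 = (a + 2) * (a + 1) by rewrite /ratio_num mE xE; congr (_ * _); lia.
have num2 : ratio_num m y.+2 = a * (a - 1) by rewrite /ratio_num mE xE; congr (_ * _); lia.
have num3 : ratio_num m y.+3 = (a - 2) * (a - 3) by rewrite /ratio_num mE xE; congr (_ * _); lia.
have num_le_den2 : a * (a - 1) <= (y + 2) * (y + a).
  rewrite -num2 (_ : (y + 2) * (y + a) = ratio_den m y.+2); last first.
    by rewrite /ratio_den mE xE; congr (_ * _); lia.
  by apply: num_le_den; lia.
rewrite num1 num2 num3.
have -> : m - y = y + a + 2 by lia.
have -> : m - y.+1 = y + a + 1 by lia.
have -> : m - y.+2 = y + a by lia.
apply: leq_trans (leq_trans _ (diag_bin_drop3_ineq num_le_den2)) _; apply: eq_leq; ring.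
Qed.

Lemma shifted_diag_bin_drop2 : diag_bin (m - 2) x.+1 <= diag_bin (m - 2) x.-1.
Proof.
have [y xE] : exists y, x = y.+1 by exists x.-1; lia.
have [a mE] : exists a, m = 2 * x + a by exists (m - 2 * x); lia.
have chain := mul_chain (diag_bin_ratio (m - 2) y) (diag_bin_ratio (m - 2) y.+1).
rewrite xE; apply: (ratio_leq _ chain); first by rewrite !muln_gt0; lia.
have num1 : ratio_num (m - 2) y.+1 = a * (a - 1).
  by rewrite /ratio_num mE xE; congr (_ * _); lia.
have num2 : ratio_num (m - 2) y.+2 = (a - 2) * (a - 3).
  by rewrite /ratio_num mE xE; congr (_ * _); lia.
have num_le_den2 : a * (a - 1) <= (y + 2) * (y + a).
  rewrite (_ : a * (a - 1) = ratio_num m y.+2); last first.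
    by rewrite /ratio_num mE xE; congr (_ * _); lia.
  rewrite (_ : (y + 2) * (y + a) = ratio_den m y.+2); last first.
    by rewrite /ratio_den mE xE; congr (_ * _); lia.
  by apply: num_le_den; lia.
have den_lt_num' : (y + 1) * (y + 1 + a) < (a + 2) * (a + 1).
  rewrite (_ : (a + 2) * (a + 1) = ratio_num m x); last first.
    by rewrite /ratio_num mE xE; congr (_ * _); lia.
  rewrite (_ : (y + 1) * (y + 1 + a) = ratio_den m x) //.
  by rewrite /ratio_den mE xE; congr (_ * _); lia.
rewrite num1 num2.
have -> : m - 2 - y = y + a by lia.
have -> : m - 2 - y.+1 = y + a - 1 by lia.
apply: leq_trans (leq_trans _ (shifted_diag_bin_drop2_ineq num_le_den2 den_lt_num')) _.
  by apply: eq_leq; ring.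
by apply: eq_leq; ring.
Qed.

Lemma tadpole3_tail_incr k : k < x -> tadpole3_tail m k <= tadpole3_tail m k.+1.
Proof.
move=> kx; have kx' : k < x.-1.+1 by rewrite prednK.
have := shift_incr cycle_coef_incr (ltnW kx).
have := shift_incr diag_bin_incr kx'.
have := shift_incr (shift_incr diag_bin_incr) (ltnW kx').
rewrite /tadpole3_tail; lia.
Qed.

Lemma tadpole3_coef_incr k : k < x -> tadpole3_coef m k <= tadpole3_coef m k.+1.
Proof. by move=> kx; rewrite leq_add ?cycle_coef_incr ?tadpole3_tail_incr. Qed.

Lemma tadpole3_coef_peak : prev_coef (tadpole3_coef m) x < tadpole3_coef m x.
Proof.
have xx : x.-1 < x by rewrite ltn_predL.
have := cycle_coef_peak; have := tadpole3_tail_incr xx.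
by rewrite !prev_coef_pred // prednK // /tadpole3_coef; lia.
Qed.

Lemma tadpole3_coef_decr k : x < k -> tadpole3_coef m k.+1 <= tadpole3_coef m k.
Proof.
move=> xk; rewrite /tadpole3_coef /tadpole3_tail.
have [-> | kx] := eqVneq k x.+1.
  (* Here p_{k-2} still increases; the two drops make up for it. *)
  have cE : cycle_coef m x = diag_bin m x + diag_bin (m - 2) x.-1.
    by rewrite /cycle_coef prev_coef_pred.
  have cE2 : cycle_coef m x.+2 = diag_bin m x.+2 + diag_bin (m - 2) x.+1 by [].
  have := diag_bin_drop3; have := shifted_diag_bin_drop2.
  have := cycle_coef_decr (leqnn x); have := diag_bin_decr (leqnn x).
  by rewrite /= [in prev_coef _ x]prev_coef_pred // cE cE2; lia.
have xk1 : x.+1 < k by lia.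
have := cycle_coef_decr (ltnW xk); have := shift_decr cycle_coef_decr xk.
have := shift_decr diag_bin_decr xk; have := shift_decr (shift_decr diag_bin_decr) xk1.
lia.
Qed.

Lemma cycle_tadpole3_modes :
  [/\ is_mode (cycle_coef m) x, unimodal (tadpole3_coef m)
    & exists2 i, is_mode (tadpole3_coef m) i & x <= i <= x.+1].
Proof.
have [T_unimodal T_mode] := unimodal_peak tadpole3_coef_incr tadpole3_coef_peak tadpole3_coef_decr.
by split => //; split; [exact: cycle_coef_peak | exact: cycle_coef_decr].
Qed.

End CycleThreshold.

Theorem proposition3p3 (m : nat) (hm : 5 <= m) :
  unimodal (indep_coef (tadpole_graph m 3)) /\
  exists i rho : nat,
    [/\ is_mode (indep_coef (tadpole_graph m 3)) i,
        is_mode (indep_coef (cycle_graph m)) rho &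
        rho <= i <= rho + 2].
Proof.
have m_gt2 : 2 < m by lia.
have [x [x_gt0 x_half den_lt_num num_le_den]] := cycle_ratio_threshold hm.
have [C_mode T_unimodal [i T_mode xi]] :=
  cycle_tadpole3_modes hm x_gt0 x_half den_lt_num num_le_den.
have eC k : cycle_coef m k = indep_coef (cycle_graph m) k by rewrite indep_coef_cycle.
have eT k : tadpole3_coef m k = indep_coef (tadpole_graph m 3) k by rewrite indep_coef_tadpole3.
split; first exact: eq_unimodal eT T_unimodal.
by exists i, x; split; [exact: eq_is_mode eT T_mode | exact: eq_is_mode eC C_mode | lia].
Qed.
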